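(* Let $1<n\leq\infty$. Then there is $g\in L_\infty(\Omega_n)$ with $\mathrm{Diam}(g(\Omega_n))=1$ and $\widetilde\Lambda_n=\sup_{z\in\mathbb{C}}\frac{1}{\|g-z\|_1}$.
   Context: For $n\in\mathbb{N}$, $(\Omega_n,\mu_n)$ is $\{1,\dots,n\}$ with normalized counting measure; $(\Omega_\infty,\mu_\infty)$ is $[0,1]$ with Lebesgue measure; $\|\cdot\|_1$ is the $L_1(\Omega_n,\mu_n)$-norm; $\mathrm{Diam}(A)=\sup_{z,w\in A}|z-w|$. For $n>1$: $\widetilde\Lambda_n=2$ if $n\in\{2,4\}$; $\widetilde\Lambda_n=\sqrt3$ if $n=3k$ ($k\in\mathbb{N}$) or $n=\infty$; $\widetilde\Lambda_n=\frac{2\sqrt3}{\sqrt{\frac{3k-3}{3k+1}}+\frac{3k+3}{3k+1}}$ if $n=3k+1\neq4$; $\widetilde\Lambda_n=\frac{2\sqrt3}{\sqrt{\frac{3k+6}{3k+2}}+\frac{3k}{3k+2}}$ if $n=3k+2$ ($k\in\mathbb{N}$). *)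

From HB Require Import structures.
From mathcomp Require Import all_boot all_order all_algebra.
From mathcomp Require Import all_classical all_reals all_analysis.
From mathcomp Require Import complex.
Set Implicit Arguments. Unset Strict Implicit. Unset Printing Implicit Defensive.
Import Order.TTheory GRing.Theory Num.Theory.
Local Open Scope classical_set_scope.
Local Open Scope ring_scope.

Definition cmod {R : realType} (z : R[i]) : R :=
  Num.sqrt (complex.Re z ^+ 2 + complex.Im z ^+ 2).

Definition Diam {R : realType} (A : set R[i]) : \bar R :=
  ereal_sup [set (cmod (z - w))%:E | z in A & w in A].

(* ---------- finite case: Omega_n = {1..n} (= 'I_n), normalized counting measure *)
Definition L1norm_fin {R : realType} (n : nat) (f : 'I_n -> R[i]) : R :=
  (n%:R)^-1 * \sum_(i < n) cmod (f i).

(* ---------- case n = infinity: Omega_oo = [0,1] with Lebesgue measure *)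
Definition Omega_inf {R : realType} : set R := `[0%R, 1%R].

Definition cmeasurable {R : realType} (g : R -> R[i]) : Prop :=
  measurable_fun Omega_inf (fun x => complex.Re (g x)) /\
  measurable_fun Omega_inf (fun x => complex.Im (g x)).

Definition in_Linf {R : realType} (g : R -> R[i]) : Prop :=
  cmeasurable g /\
  exists M : R, {ae (@lebesgue_measure R), forall x, Omega_inf x -> cmod (g x) <= M}.

Definition L1norm_inf {R : realType} (f : R -> R[i]) : \bar R :=
  (\int[@lebesgue_measure R]_(x in Omega_inf) (cmod (f x))%:E)%E.

(* essential range of g on [0,1]: g(Omega_oo) for an L_infty class *)
Definition ess_range {R : realType} (g : R -> R[i]) : set R[i] :=
  [set z | forall e : R, 0 < e ->
     Order.lt (0%E : \bar R) (@lebesgue_measure R [set x | Omega_inf x /\ cmod (g x - z) < e])].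

Definition LambdaT_fin {R : realType} (n : nat) : R :=
  let k := (n %/ 3)%N in
  let s3 := Num.sqrt (3 : R) in
  if (n == 2)%N || (n == 4)%N then 2
  else if (n %% 3 == 0)%N then s3
  else if (n %% 3 == 1)%N then
    2 * s3 / (Num.sqrt ((3 * k%:R - 3) / (3 * k%:R + 1)) + (3 * k%:R + 3) / (3 * k%:R + 1))
  else
    2 * s3 / (Num.sqrt ((3 * k%:R + 6) / (3 * k%:R + 2)) + (3 * k%:R) / (3 * k%:R + 2)).

Definition LambdaT_inf {R : realType} : R := Num.sqrt 3.

(* Let g take the vertices A, B, C of a unit equilateral triangle with masses
   P, P, Q; its range has diameter 1 and ||g - z||_1 = P|A - z| + P|B - z| + Q|C - z|
   is a weighted Fermat-Torricelli problem.  When Q^2 <= 3 P^2 its minimum is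
   (sqrt(4 P^2 - Q^2) + sqrt 3 Q) / 2, attained on the symmetry axis of the
   triangle, so sup_z 1 / ||g - z||_1 is the inverse of this minimum.  On [0, 1]
   the masses P = Q = 1/3 give sqrt 3; on n points the masses p/n, q/n with
   n = 2p + q and (p, q) = (k, k), (k, k + 1), (k + 1, k) for n = 3k, 3k + 1,
   3k + 2, and (1, 0), (2, 0) for n = 2, 4, give the constants of the statement. *)

From HB Require Import structures.
From mathcomp Require Import all_boot all_order all_algebra.
From mathcomp Require Import all_classical all_reals all_analysis.
From mathcomp Require Import complex.
From mathcomp Require Import ring lra zify.
Set Implicit Arguments. Unset Strict Implicit. Unset Printing Implicit Defensive.
Import Order.TTheory GRing.Theory Num.Theory.
Local Open Scope classical_set_scope.
Local Open Scope ring_scope.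

Lemma eq_sqrtr (F : rcfType) (x y : F) : 0 <= x -> x ^+ 2 = y -> Num.sqrt y = x.
Proof. by move=> x0 <-; rewrite sqrtr_sqr ger0_norm. Qed.

Lemma cauchy_schwarz2 (F : rcfType) (a b p q : F) :
  a * p + b * q <= Num.sqrt (a ^+ 2 + b ^+ 2) * Num.sqrt (p ^+ 2 + q ^+ 2).
Proof.
rewrite -sqrtrM ?addr_ge0 ?sqr_ge0 //; apply: le_trans (ler_norm _) _.
rewrite -sqrtr_sqr ler_sqrt ?mulr_ge0 ?addr_ge0 ?sqr_ge0 //.
have lagrange : (a ^+ 2 + b ^+ 2) * (p ^+ 2 + q ^+ 2)
    = (a * p + b * q) ^+ 2 + (a * q - b * p) ^+ 2 by ring.
by rewrite lagrange lerDl sqr_ge0.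
Qed.

Lemma ereal_sup_inv_min (R : realType) (T : Type) (G : T -> R) (l : R) :
  0 < l -> (forall z, l <= G z) -> (exists z, G z = l) ->
  ereal_sup [set ((G z)^-1)%:E | z in [set: T]] = (l^-1)%:E.
Proof.
move=> l0 lb [z0 Gz0]; apply/eqP; rewrite eq_le; apply/andP; split.
  apply: ge_ereal_sup => _ [z _ <-]; rewrite lee_fin.
  by rewrite lef_pV2 ?posrE //; apply: lt_le_trans l0 _.
by apply: ereal_sup_ubound; exists z0 => //; rewrite Gz0.
Qed.

Section ComplexModulus.
Variable R : realType.
Implicit Types (z w : R[i]) (A : set R[i]).

Lemma cmodB (a b c d : R) :
  cmod ((a +i* b)%C - (c +i* d)%C) = Num.sqrt ((a - c) ^+ 2 + (b - d) ^+ 2).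
Proof. by []. Qed.

Lemma cmod0 : cmod (0 : R[i]) = 0.
Proof. by rewrite /cmod /= expr0n /= addr0 sqrtr0. Qed.

Lemma cmod_gt0 w : w != 0 -> 0 < cmod w.
Proof.
case: w => a b w0; rewrite /cmod /= sqrtr_gt0 lt_def addr_ge0 ?sqr_ge0 // andbT.
by apply: contra w0; rewrite paddr_eq0 ?sqr_ge0 // !sqrf_eq0 => /andP[/eqP-> /eqP->].
Qed.

Lemma Diam_attained A a b :
  (forall z w, A z -> A w -> cmod (z - w) <= cmod (a - b)) -> A a -> A b ->
  Diam A = (cmod (a - b))%:E.
Proof.
move=> ub Aa Ab; apply/eqP; rewrite eq_le; apply/andP; split.
  by apply: ge_ereal_sup => _ [z Az [w Aw <-]]; rewrite lee_fin; exact: ub.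
by apply: ereal_sup_ubound; exists a => //; exists b.
Qed.

Lemma separated_from_seq z (s : seq R[i]) : z \notin s ->
  exists2 e, 0 < e & forall v, v \in s -> e <= cmod (v - z).
Proof.
elim: s => [|v s IHs]; first by exists 1.
rewrite inE negb_or => /andP[zv /IHs[e e0 le_e]].
have vz0 : 0 < cmod (v - z) by rewrite cmod_gt0 // subr_eq0 eq_sym.
exists (Num.min e (cmod (v - z))); first by rewrite lt_min e0.
move=> u; rewrite inE => /orP[/eqP->|us]; first by rewrite ge_min lexx orbT.
by rewrite ge_min le_e.
Qed.

End ComplexModulus.

Section EssentialRange.
Variable R : realType.
Implicit Types (g : R -> R[i]) (v z : R[i]).

Lemma ess_range_sub_seq g (s : seq R[i]) :
  (forall x, g x \in s) -> ess_range g `<=` [set z | z \in s].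
Proof.
move=> gs z gz /=; apply/negPn/negP => /separated_from_seq[e e0 le_e].
have empty : [set x | Omega_inf x /\ cmod (g x - z) < e] = set0.
  by apply/seteqP; split => x //= [_]; rewrite ltNge (le_e _ (gs x)).
by have := gz e e0; rewrite empty measure0 ltxx.
Qed.

Lemma ess_range_itv g v (a b : R) :
  measurable_fun Omega_inf (fun x => cmod (g x - v)) ->
  0 <= a -> a < b -> b <= 1 -> (forall x, a <= x -> x < b -> g x = v) ->
  ess_range g v.
Proof.
move=> mgv a0 ab b1 gv e e0.
have mO : measurable (Omega_inf : set R) by exact: measurable_itv.
have -> : [set x | Omega_inf x /\ cmod (g x - v) < e] =
    Omega_inf `&` (fun x => cmod (g x - v)) @^-1` `]-oo, e[.
  by apply/seteqP; split => x /= [Ox gxv]; split => //; move: gxv; rewrite in_itv.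
have ab_sub : `[a, b[ `<=` Omega_inf `&` (fun x => cmod (g x - v)) @^-1` `]-oo, e[.
  move=> x /=; rewrite !in_itv /= => /andP[ax xb]; split.
    by rewrite /Omega_inf /= in_itv /=; apply/andP; split; lra.
  by rewrite gv // subrr cmod0.
have mS := mgv mO _ (measurable_itv `]-oo, e[).
have mI : measurable (`[a, b[ : set R) by exact: measurable_itv.
have ab_len : lebesgue_measure (`[a, b[ : set R) = (b - a)%:E.
  by rewrite lebesgue_measure_itv /= lte_fin ab -EFinB.
have := le_measure lebesgue_measure (mem_set mI) (mem_set mS) ab_sub.
by apply: lt_le_trans; move: ab_len => /= ->; rewrite lte_fin subr_gt0.
Qed.

End EssentialRange.

Section WeightedFermat.
Variable R : realType.
Local Notation sqrt3 := (Num.sqrt 3 : R).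

Lemma sqrt3_sq : sqrt3 ^+ 2 = 3. Proof. by rewrite sqr_sqrtr. Qed.
Lemma sqrt3_gt0 : 0 < sqrt3. Proof. by rewrite sqrtr_gt0. Qed.

Definition triA : R[i] := (0 +i* 0)%C.
Definition triB : R[i] := (1 +i* 0)%C.
Definition triC : R[i] := (2^-1 +i* (sqrt3 / 2))%C.
Definition triangle : seq R[i] := [:: triA; triB; triC].

Lemma cmod_triAB : cmod (triA - triB) = 1.
Proof. by rewrite cmodB; apply: eq_sqrtr; [lra | ring]. Qed.

Lemma cmod_triangle_le1 u v : u \in triangle -> v \in triangle -> cmod (u - v) <= 1.
Proof.
have sq3 := sqrt3_sq.
have dist_le1 (x y : R) : x ^+ 2 + y ^+ 2 <= 1 -> Num.sqrt (x ^+ 2 + y ^+ 2) <= 1.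
  by move=> xy1; rewrite -sqrtr1 ler_sqrt.
by rewrite !inE => /or3P[] /eqP-> /or3P[] /eqP->; rewrite cmodB; apply: dist_le1; nra.
Qed.

Definition tri_dist (P Q : R) (z : R[i]) : R :=
  P * cmod (triA - z) + P * cmod (triB - z) + Q * cmod (triC - z).

(* Q^2 <= 3 P^2 says that the weighted Fermat point lies in the triangle. *)
Definition fermat_admissible (P Q : R) := [/\ 0 < P, 0 <= Q & Q ^+ 2 <= 3 * P ^+ 2].

Definition tri_dist_min (P Q : R) : R := Num.sqrt (4 * P ^+ 2 - Q ^+ 2) / 2 + Q * sqrt3 / 2.
Definition fermat_point (P Q : R) : R[i] :=
  (2^-1 +i* (Q / (2 * Num.sqrt (4 * P ^+ 2 - Q ^+ 2))))%C.

Lemma fermat_sqrt_spec P Q : fermat_admissible P Q ->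
  0 < Num.sqrt (4 * P ^+ 2 - Q ^+ 2) /\
  Num.sqrt (4 * P ^+ 2 - Q ^+ 2) ^+ 2 = 4 * P ^+ 2 - Q ^+ 2.
Proof.
case=> P0 _ QP; have PQ : 0 < 4 * P ^+ 2 - Q ^+ 2 by nra.
by rewrite sqrtr_gt0 sqr_sqrtr // ltW.
Qed.

Lemma tri_dist_min_gt0 P Q : fermat_admissible P Q -> 0 < tri_dist_min P Q.
Proof.
move=> PQ; have [S0 _] := fermat_sqrt_spec PQ; case: PQ => _ Q0 _.
by have := sqrt3_gt0; rewrite /tri_dist_min; nra.
Qed.

(* With S := sqrt(4 P^2 - Q^2), the unit vectors (S, Q) / 2P, (-S, Q) / 2P and
   (0, -1) have P, P, Q-weighted sum 0, so pairing them with z - A, z - B, z - C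
   by Cauchy-Schwarz gives a lower bound in which z cancels. *)
Lemma tri_dist_ge_min P Q z : fermat_admissible P Q -> tri_dist_min P Q <= tri_dist P Q z.
Proof.
move=> PQ; have [S0 S_sq] := fermat_sqrt_spec PQ; case: PQ => P0 Q0 _.
case: z => x y; rewrite /tri_dist /tri_dist_min /triA /triB /triC !cmodB.
move: S0 S_sq; move: (Num.sqrt _) => S S0 S_sq.
have norm2P (a : R) : a ^+ 2 = S ^+ 2 -> Num.sqrt (a ^+ 2 + Q ^+ 2) = 2 * P.
  by move=> ->; apply: eq_sqrtr; [lra | rewrite S_sq; ring].
have cA := cauchy_schwarz2 S Q (x - 0) (y - 0).
have cB := cauchy_schwarz2 (- S) Q (x - 1) (y - 0).
have cC := cauchy_schwarz2 0 (-1) (x - 2^-1) (y - sqrt3 / 2).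
rewrite norm2P // in cA; rewrite norm2P ?sqrrN // in cB.
rewrite (_ : Num.sqrt (0 ^+ 2 + (-1) ^+ 2) = 1) in cC; last by apply: eq_sqrtr; [lra | ring].
have subC (u v : R) : (u - v) ^+ 2 = (v - u) ^+ 2 by ring.
rewrite !(subC x) !(subC y) in cA cB cC.
by have := sqrt3_gt0; nra.
Qed.

Lemma tri_dist_fermat_point P Q : fermat_admissible P Q ->
  tri_dist P Q (fermat_point P Q) = tri_dist_min P Q.
Proof.
move=> PQ; have [S0 S_sq] := fermat_sqrt_spec PQ; case: PQ => P0 Q0 QP.
rewrite /tri_dist /tri_dist_min /fermat_point /triA /triB /triC !cmodB.
move: S0 S_sq; move: (Num.sqrt (4 * P ^+ 2 - Q ^+ 2)) => S S0 S_sq.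
have sq3 := sqrt3_sq; have s3 := sqrt3_gt0.
have dist_base (u : R) : (u - 2^-1) ^+ 2 = 4^-1 ->
    Num.sqrt ((u - 2^-1) ^+ 2 + (0 - Q / (2 * S)) ^+ 2) = P / S.
  move=> u2; apply: eq_sqrtr; first by apply: divr_ge0; lra.
  have SS0 : 0 < 4 * P ^+ 2 - Q ^+ 2 by rewrite -S_sq exprn_gt0.
  rewrite u2 sub0r sqrrN !expr_div_n exprMn S_sq; field; lra.
rewrite !dist_base; [| by field ..].
have Q_le : Q / (2 * S) <= sqrt3 / 2.
  rewrite ler_pdivrMr; last lra.
  rewrite (_ : sqrt3 / 2 * (2 * S) = sqrt3 * S); last by field.
  have : Q ^+ 2 <= (sqrt3 * S) ^+ 2 by rewrite exprMn sq3 S_sq; lra.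
  by have := mulr_gt0 s3 S0; nra.
rewrite (_ : Num.sqrt _ = sqrt3 / 2 - Q / (2 * S)); last by apply: eq_sqrtr; [lra | ring].
rewrite (_ : S / 2 = (4 * P ^+ 2 - Q ^+ 2) / (2 * S)); last by rewrite -S_sq; field; lra.
by field; lra.
Qed.

Lemma tri_dist_min_inv P Q : fermat_admissible P Q ->
  (tri_dist_min P Q)^-1 = 2 * sqrt3 / (Num.sqrt (3 * (4 * P ^+ 2 - Q ^+ 2)) + 3 * Q).
Proof.
move=> PQ; have [S0 _] := fermat_sqrt_spec PQ; case: PQ => _ Q0 _.
have sq3 := sqrt3_sq; have s3 := sqrt3_gt0.
rewrite sqrtrM // /tri_dist_min; move: S0; move: (Num.sqrt (4 * P ^+ 2 - Q ^+ 2)) => S S0.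
rewrite (_ : 3 * Q = sqrt3 * (sqrt3 * Q)); last by rewrite mulrA -expr2 sq3.
by field; nra.
Qed.

Lemma ereal_sup_inv_tri_dist (G : R[i] -> R) P Q :
  fermat_admissible P Q -> G =1 tri_dist P Q ->
  ereal_sup [set ((G z)^-1)%:E | z in [set: R[i]]] = ((tri_dist_min P Q)^-1)%:E.
Proof.
move=> PQ eqG; apply: ereal_sup_inv_min (tri_dist_min_gt0 PQ) _ _.
  by move=> z; rewrite eqG tri_dist_ge_min.
by exists (fermat_point P Q); rewrite eqG tri_dist_fermat_point.
Qed.

Lemma fermat_admissible_nat (p q n : nat) :
  (0 < p)%N -> (q ^ 2 <= 3 * p ^ 2)%N -> (0 < n)%N ->
  fermat_admissible (p%:R / n%:R) (q%:R / n%:R).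
Proof.
move=> p0 qp n0; have n0' : 0 < n%:R :> R by rewrite ltr0n.
split; [by rewrite divr_gt0 ?ltr0n | by rewrite divr_ge0 |].
rewrite !expr_div_n mulrA ler_pM2r ?invr_gt0 ?exprn_gt0 //.
by rewrite -!natrX -natrM ler_nat.
Qed.

Lemma inv_tri_dist_min_nat (p q n : nat) (X Y : R) :
  (0 < p)%N -> (q ^ 2 <= 3 * p ^ 2)%N -> (0 < n)%N ->
  3 * (4 * p%:R ^+ 2 - q%:R ^+ 2) / n%:R ^+ 2 = X -> 3 * q%:R / n%:R = Y ->
  (tri_dist_min (p%:R / n%:R) (q%:R / n%:R))^-1 = 2 * sqrt3 / (Num.sqrt X + Y).
Proof.
move=> p0 qp n0 <- <-; have n0' : n%:R != 0 :> R by rewrite pnatr_eq0 -lt0n.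
rewrite tri_dist_min_inv; last exact: fermat_admissible_nat.
by congr (_ / (Num.sqrt _ + _)); field.
Qed.

Lemma LambdaT_fin_weights (n : nat) : (1 < n)%N -> exists p q : nat,
  [/\ (0 < p)%N, (q ^ 2 <= 3 * p ^ 2)%N, n = (2 * p + q)%N &
      LambdaT_fin n = (tri_dist_min (p%:R / n%:R) (q%:R / n%:R))^-1].
Proof.
move=> n1; have s3 := sqrt3_gt0; have n0 : (0 < n)%N by lia.
have [->|n2] := eqVneq n 2.
  exists 1%N, 0%N; split => //.
  by rewrite (@inv_tri_dist_min_nat _ _ _ 3 0) //; [field; lra | field | field].
have [->|n4] := eqVneq n 4.
  exists 2%N, 0%N; split => //.
  by rewrite (@inv_tri_dist_min_nat _ _ _ 3 0) //; [field; lra | field | field].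
rewrite /LambdaT_fin (negbTE n2) (negbTE n4) /=.
have n_eq := divn_eq n 3; set k := (n %/ 3)%N in n_eq *.
have [r0|[r1|r2]] : (n %% 3 = 0 \/ n %% 3 = 1 \/ n %% 3 = 2)%N by lia.
- rewrite r0 /=; have k0 : (0 < k)%N by lia.
  have nE : n%:R = 3 * k%:R :> R by rewrite n_eq r0 addn0 natrM mulrC.
  have kR : 0 < k%:R :> R by rewrite ltr0n.
  exists k, k; split; [lia | lia | lia |].
  rewrite (@inv_tri_dist_min_nat _ _ _ 1 1 k0) ?sqrtr1; [by field | lia | done | |];
    by rewrite nE; field; lra.
- rewrite r1 /=; have k2 : (2 <= k)%N by lia.
  have nE : n%:R = 3 * k%:R + 1 :> R by rewrite n_eq r1 natrD natrM mulrC.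
  have kR : 2 <= k%:R :> R by rewrite (ler_nat R 2).
  exists k, k.+1; split; [lia | nia | lia |].
  apply/esym/inv_tri_dist_min_nat; [lia | nia | lia | |];
    by rewrite nE -addn1 natrD; field; lra.
- rewrite r2 /=; have kR : 0 <= k%:R :> R by rewrite ler0n.
  have nE : n%:R = 3 * k%:R + 2 :> R by rewrite n_eq r2 natrD natrM mulrC.
  exists k.+1, k; split; [lia | nia | lia |].
  apply/esym/inv_tri_dist_min_nat; [lia | nia | lia | |];
    by rewrite nE -addn1 natrD; field; lra.
Qed.

Lemma LambdaT_inf_tri : LambdaT_inf = (tri_dist_min 3^-1 3^-1)^-1 :> R.
Proof.
have PQ : fermat_admissible (3^-1 : R) 3^-1 by split; lra.
rewrite tri_dist_min_inv // (_ : 3 * _ = 1); last by field.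
by rewrite sqrtr1 /LambdaT_inf; field; have := sqrt3_gt0; lra.
Qed.

End WeightedFermat.

Arguments triA {R}.
Arguments triB {R}.
Arguments triC {R}.
Arguments triangle {R}.

Section FiniteModel.
Variable R : realType.

Definition gfin (p i : nat) : R[i] :=
  if (i < p)%N then triA else if (i < 2 * p)%N then triB else triC.

Lemma gfin_triangle p i : gfin p i \in triangle.
Proof. by rewrite /gfin; case: ifP => _; [|case: ifP => _]; rewrite !inE eqxx ?orbT. Qed.

Lemma sum_cmod_gfin (p q : nat) (z : R[i]) :
  \sum_(i < 2 * p + q) cmod (gfin p i - z) = tri_dist p%:R q%:R z.
Proof.
rewrite -(big_mkord xpredT (fun i => cmod (gfin p i - z))).
rewrite (@big_cat_nat _ _ _ p) /=; [|lia|lia].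
rewrite (@big_cat_nat _ _ _ (2 * p) p) /=; [|lia|lia].
rewrite (@eq_big_nat _ _ _ 0 p _ (fun=> cmod (triA - z))); last first.
  by move=> i /andP[_ ip]; rewrite /gfin ip.
rewrite (@eq_big_nat _ _ _ p (2 * p) _ (fun=> cmod (triB - z))); last first.
  by move=> i /andP[pi ip]; rewrite /gfin ltnNge pi ip.
rewrite (@eq_big_nat _ _ _ (2 * p) (2 * p + q) _ (fun=> cmod (triC - z))); last first.
  by move=> i /andP[pi _]; rewrite /gfin !ltnNge pi (leq_trans _ pi) ?leq_pmull.
rewrite !sumr_const_nat /tri_dist !mulr_natl subn0 addrA.
by rewrite mul2n -addnn addnK addKn.
Qed.

Lemma L1norm_fin_gfin (p q : nat) (z : R[i]) :
  L1norm_fin (fun i : 'I_(2 * p + q) => gfin p i - z)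
  = tri_dist (p%:R / (2 * p + q)%:R) (q%:R / (2 * p + q)%:R) z.
Proof. by rewrite /L1norm_fin sum_cmod_gfin /tri_dist; ring. Qed.

Lemma Diam_range_gfin (p q : nat) : (0 < p)%N ->
  Diam (range (fun i : 'I_(2 * p + q) => gfin p i)) = 1%E.
Proof.
move=> p0; rewrite -cmod_triAB; apply: Diam_attained.
- move=> _ _ [i _ <-] [j _ <-]; rewrite cmod_triAB.
  by apply: cmod_triangle_le1; apply: gfin_triangle.
- have i0 : (0 < 2 * p + q)%N by lia.
  by exists (Ordinal i0) => //; rewrite /gfin /= p0.
- have ip : (p < 2 * p + q)%N by lia.
  by exists (Ordinal ip) => //; rewrite /gfin /= ltnn ifT //; lia.
Qed.

End FiniteModel.

Section ModelOnUnitInterval.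
Variable R : realType.

Definition ginf (x : R) : R[i] :=
  if x < 3^-1 then triA else if x < 2 / 3 then triB else triC.

Lemma ginf_triangle x : ginf x \in triangle.
Proof. by rewrite /ginf; case: ifP => _; [|case: ifP => _]; rewrite !inE eqxx ?orbT. Qed.

Lemma measurable_fun_ginf (F : R[i] -> R) : measurable_fun Omega_inf (F \o ginf).
Proof.
have -> : F \o ginf =
    (fun x => if x < 3^-1 then F triA else if x < 2 / 3 then F triB else F triC).
  by apply: funext => x; rewrite /= /ginf; case: ifP => _ //; case: ifP.
have mlt (c : R) : measurable_fun setT (fun x : R => x < c).
  by apply: measurable_realfun.measurable_fun_ltr; [exact: measurable_id | exact: measurable_cst].
apply: (measurable_funS measurableT) => //.
apply: measurable_fun_ifT (mlt _) (measurable_cst _) _.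
exact: measurable_fun_ifT (mlt _) (measurable_cst _) (measurable_cst _).
Qed.

Lemma in_Linf_ginf : in_Linf ginf.
Proof.
split; first by split; apply: measurable_fun_ginf.
exists 1; apply: aeW => x _.
have := cmod_triangle_le1 (ginf_triangle x) (mem_head triA [:: triB; triC]).
by rewrite /triA subr0.
Qed.

Lemma integral_cst_on (D : set R) (f : R -> R) (c : R) : measurable D ->
  {in D, forall x, f x = c} ->
  (\int[@lebesgue_measure R]_(x in D) (f x)%:E = c%:E * lebesgue_measure D)%E.
Proof. by move=> mD fc; rewrite (eq_integral (fun=> c%:E)) ?integral_cst // => x /fc ->. Qed.

Lemma Omega_inf_thirds :
  Omega_inf = `[0, 3^-1[ `|` (`[3^-1, 2/3[ `|` `[2/3, 1]) :> set R.
Proof.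
rewrite /Omega_inf; apply/seteqP; split => x /=; rewrite !in_itv /=.
  move=> /andP[x0 x1].
  case: (ltP x 3^-1) => x13; first by left; apply/andP; split; lra.
  right; case: (ltP x (2/3)) => x23; first by left; apply/andP; split; lra.
  by right; apply/andP; split; lra.
by case=> [/andP[? ?]|[] /andP[? ?]]; apply/andP; split; lra.
Qed.

Lemma L1norm_inf_ginf z : L1norm_inf (fun x => ginf x - z) = (tri_dist 3^-1 3^-1 z)%:E.
Proof.
have m1 : measurable (`[0, 3^-1[ : set R) by exact: measurable_itv.
have m2 : measurable (`[3^-1, 2/3[ : set R) by exact: measurable_itv.
have m3 : measurable (`[2/3, 1] : set R) by exact: measurable_itv.
have m23 : measurable (`[3^-1, 2/3[ `|` `[2/3, 1] : set R) by exact: measurableU.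
have d23 : [disjoint (`[3^-1, 2/3[ : set R) & `[2/3, 1]].
  by apply/disj_setPS => x [] /=; rewrite !in_itv /= => /andP[? ?] /andP[? ?]; lra.
have d1_23 : [disjoint (`[0, 3^-1[ : set R) & (`[3^-1, 2/3[ `|` `[2/3, 1])].
  by apply/disj_setPS => x [] /=; rewrite !in_itv /= => /andP[? ?] [] /andP[? ?]; lra.
have mf D : D `<=` Omega_inf -> measurable D ->
    measurable_fun D (fun x => cmod (ginf x - z)).
  move=> DO mD; apply: measurable_funS (measurable_itv _) DO _.
  exact: measurable_fun_ginf (fun v => cmod (v - z)).
rewrite /L1norm_inf Omega_inf_thirds integral_setU //; last first.
  apply/measurable_realfun.measurable_EFinP; apply: mf; first by rewrite Omega_inf_thirds.
  exact: measurableU.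
rewrite integral_setU //; last first.
  apply/measurable_realfun.measurable_EFinP; apply: mf => //.
  by rewrite Omega_inf_thirds => x; right.
rewrite (@integral_cst_on _ _ (cmod (triA - z))) //; last first.
  by move=> x; rewrite inE /= in_itv /= => /andP[_ x13]; rewrite /ginf x13.
rewrite (@integral_cst_on _ _ (cmod (triB - z))) //; last first.
  by move=> x; rewrite inE /= in_itv /= => /andP[x13 x23]; rewrite /ginf x23 ltNge x13.
rewrite (@integral_cst_on _ _ (cmod (triC - z))) //; last first.
  move=> x; rewrite inE /= in_itv /= => /andP[x23 _].
  by rewrite /ginf !ltNge x23 (le_trans _ x23) //; lra.
rewrite !lebesgue_measure_itv /= !lte_fin !ifT; [|lra..].
by rewrite -!EFinB -!EFinM -!EFinD /tri_dist; congr EFin; field.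
Qed.

Lemma Diam_ess_range_ginf : Diam (ess_range ginf) = 1%E.
Proof.
have mg v : measurable_fun Omega_inf (fun x => cmod (ginf x - v)).
  exact: measurable_fun_ginf (fun w => cmod (w - v)).
rewrite -cmod_triAB; apply: Diam_attained.
- move=> z w /ess_range_sub_seq zT /ess_range_sub_seq wT.
  by rewrite cmod_triAB; apply: cmod_triangle_le1; [apply: zT | apply: wT];
    exact: ginf_triangle.
- apply: (@ess_range_itv _ _ triA 0 3^-1 (mg triA)); [lra | lra | lra |].
  by move=> x _ x13; rewrite /ginf x13.
- apply: (@ess_range_itv _ _ triB 3^-1 (2/3) (mg triB)); [lra | lra | lra |].
  by move=> x x13 x23; rewrite /ginf x23 ltNge x13.
Qed.

End ModelOnUnitInterval.

Theorem lemmaA2 (R : realType) :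
  (forall n : nat, (1 < n)%N ->
     exists g : 'I_n -> R[i],
       Diam (range g) = 1%E /\
       ereal_sup [set ((L1norm_fin (fun i => g i - z))^-1)%:E | z in [set: R[i]]]
         = (LambdaT_fin n : R)%:E) /\
  (exists g : R -> R[i],
       in_Linf g /\
       Diam (ess_range g) = 1%E /\
       ereal_sup [set ((fine (L1norm_inf (fun x => g x - z)))^-1)%:E | z in [set: R[i]]]
         = (LambdaT_inf : R)%:E).
Proof.
split.
  move=> n n1; have [p [q [p0 qp -> ->]]] := LambdaT_fin_weights R n1.
  exists (fun i => gfin R p i); split; first exact: Diam_range_gfin.
  apply: ereal_sup_inv_tri_dist; first by apply: fermat_admissible_nat; lia.
  exact: L1norm_fin_gfin.
exists (@ginf R); split; first exact: in_Linf_ginf.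
split; first exact: Diam_ess_range_ginf.
rewrite LambdaT_inf_tri; apply: ereal_sup_inv_tri_dist; first by split; lra.
by move=> z; rewrite L1norm_inf_ginf.
Qed.
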